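(* For any step size $\eta\le4/\rho^2$, any $Z\in\mathbb{R}^{m\times d}$ and any $t$, \[ \|W_t-Z\|^2+2\eta\sum_{i<t}\widehat{\mathcal R}^{(i)}(W_{i+1})\le\|W_0-Z\|^2+2\eta\sum_{i<t}\widehat{\mathcal R}^{(i)}(Z). \]
   Context: Sample $((x_k,y_k))_{k=1}^n$ with $\|x_k\|\le1$, $y_k\in\{\pm1\}$. $\ell(r)=\ln(1+e^{-r})$. Network of width $m$, temperature $\rho>0$, signs $a_j\in\{\pm1\}$: for $W$ with rows $w_j^\top$, $f(x;W)=\frac{\rho}{\sqrt m}\sum_ja_j\max\{0,w_j^\top x\}$, $\nabla f(x;W)=\frac{\rho}{\sqrt m}\sum_ja_j\mathbf 1[w_j^\top x\ge0]e_jx^\top$. $\widehat{\mathcal R}(W)=\frac1n\sum_k\ell(y_kf(x_k;W))$, $\nabla\widehat{\mathcal R}(W)=\frac1n\sum_k\ell'(y_kf(x_k;W))y_k\nabla f(x_k;W)$. Gradient descent from the initialization $W_0$: $W_{i+1}=W_i-\eta\nabla\widehat{\mathcal R}(W_i)$. $\widehat{\mathcal R}^{(i)}(V)=\frac1n\sum_k\ell(y_k\langle\nabla f(x_k;W_i),V\rangle)$ with $\langle A,B\rangle=\mathrm{tr}(A^\top B)$. $\|\cdot\|$ Frobenius norm. *)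

From HB Require Import structures.
From mathcomp Require Import all_boot all_order all_algebra.
From mathcomp Require Import all_classical all_reals all_analysis.
Set Implicit Arguments. Unset Strict Implicit. Unset Printing Implicit Defensive.
Import Order.TTheory GRing.Theory Num.Theory.
Local Open Scope ring_scope.

Section Defs.
Variable R : realType.

Definition logloss (r : R) : R := ln (1 + expR (- r)).
Definition logloss' (r : R) : R := - (expR (- r) / (1 + expR (- r))).

Definition frob_inner (m d : nat) (A B : 'M[R]_(m, d)) : R := \tr (A^T *m B).
Definition frob (m d : nat) (A : 'M[R]_(m, d)) : R :=
  Num.sqrt (\sum_(i < m) \sum_(j < d) A i j ^+ 2).

Variables (n m d : nat) (rho : R) (a : 'I_m -> R).

Definition preact (W : 'M[R]_(m, d)) (x : 'cV[R]_d) (j : 'I_m) : R :=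
  \sum_(l < d) W j l * x l ord0.

Definition net (x : 'cV[R]_d) (W : 'M[R]_(m, d)) : R :=
  rho / Num.sqrt m%:R * \sum_(j < m) a j * Num.max 0 (preact W x j).

Definition net_grad (x : 'cV[R]_d) (W : 'M[R]_(m, d)) : 'M[R]_(m, d) :=
  \matrix_(j < m, l < d)
    (rho / Num.sqrt m%:R * (a j * ((if 0 <= preact W x j then 1 else 0) * x l ord0))).

Variables (xs : 'I_n -> 'cV[R]_d) (ys : 'I_n -> R).

Definition emp_risk (W : 'M[R]_(m, d)) : R :=
  n%:R^-1 * \sum_(k < n) logloss (ys k * net (xs k) W).

Definition emp_risk_grad (W : 'M[R]_(m, d)) : 'M[R]_(m, d) :=
  n%:R^-1 *: \sum_(k < n) ((logloss' (ys k * net (xs k) W) * ys k) *: net_grad (xs k) W).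

Fixpoint gd (eta : R) (W0 : 'M[R]_(m, d)) (i : nat) : 'M[R]_(m, d) :=
  match i with
  | 0 => W0
  | i'.+1 => gd eta W0 i' - eta *: emp_risk_grad (gd eta W0 i')
  end.

Definition lin_risk (eta : R) (W0 : 'M[R]_(m, d)) (i : nat) (V : 'M[R]_(m, d)) : R :=
  n%:R^-1 * \sum_(k < n) logloss (ys k * frob_inner (net_grad (xs k) (gd eta W0 i)) V).

End Defs.

(* The linearized risk V |-> R^(i)(V) = n^-1 sum_k l(y_k <grad f(x_k; W_i), V>) is convex,
   and it is (rho^2/4)-smooth because l'' <= 1/4 and |grad f(x; W)| <= rho when |x| <= 1.
   Since the ReLU is positively homogeneous, <grad f(x; W), W> = f(x; W), so the gradient
   of the empirical risk at W_i is the gradient of R^(i) at W_i: every step of gradient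
   descent is a gradient step on R^(i). For a convex L-smooth F and eta <= 1/L one step
   satisfies |W' - Z|^2 + 2 eta F(W') <= |W - Z|^2 + 2 eta F(Z), and summing over i < t
   gives the claim. *)

From HB Require Import structures.
From mathcomp Require Import all_boot all_order all_algebra.
From mathcomp Require Import all_classical all_reals all_analysis.
From mathcomp Require Import ring lra.
Set Implicit Arguments. Unset Strict Implicit. Unset Printing Implicit Defensive.
Import Order.TTheory GRing.Theory Num.Theory.
Import numFieldNormedType.Exports.
Local Open Scope classical_set_scope.
Local Open Scope ring_scope.

Section Calculus.
Variable R : realType.
Implicit Types f df : R -> R.

Lemma is_derive_MVT f df (x y : R) :
  (forall z : R, is_derive z 1 f (df z)) -> x <= y ->
  exists2 c, x <= c <= y & f y - f x = df c * (y - x).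
Proof.
move=> f_df xy.
have cf : {within `[x, y], continuous f}.
  apply/continuous_subspaceT => z.
  by case: (f_df z) => /derivable1_diffP /differentiable_continuous.
have [c cxy ->] := MVT_segment xy (fun z _ => f_df z) cf.
by exists c; rewrite ?(itvP cxy).
Qed.

Lemma ge0_is_derive_ndecr f df : (forall z : R, is_derive z 1 f (df z)) ->
  (forall z, 0 <= df z) -> {homo f : x y / x <= y}.
Proof.
move=> f_df df_ge0 x y xy; have [c _ fyx] := is_derive_MVT f_df xy.
by rewrite -subr_ge0 fyx mulr_ge0 ?subr_ge0.
Qed.

Lemma is_derive_sign_change_min f df (r : R) : (forall z : R, is_derive z 1 f (df z)) ->
  (forall z, z <= r -> df z <= 0) -> (forall z, r <= z -> 0 <= df z) ->
  forall s, f r <= f s.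
Proof.
move=> f_df df_le0 df_ge0 s; rewrite -subr_ge0.
have [rs | /ltW sr] := lerP r s.
  have [c /andP[rc _] ->] := is_derive_MVT f_df rs.
  by rewrite mulr_ge0 ?df_ge0 ?subr_ge0.
have [c /andP[_ cr] fsr] := is_derive_MVT f_df sr.
by rewrite -opprB fsr -mulrN mulr_le0 ?df_le0 // oppr_le0 subr_ge0.
Qed.

End Calculus.

Section LogisticLoss.
Variable R : realType.

Lemma logloss_arg_gt0 (s : R) : 0 < 1 + expR (- s).
Proof. by rewrite ltr_wpDr ?expR_ge0. Qed.

Lemma is_derive_logloss_arg (s : R) :
  is_derive s 1 (fun t : R => 1 + expR (- t)) (- expR (- s)).
Proof.
rewrite (_ : (fun t => _) = cst 1 + expR \o -%R) //.
by apply: is_derive_eq; rewrite add0r mulrN1.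
Qed.

Lemma is_derive_logloss (s : R) : is_derive s 1 (@logloss R) (logloss' s).
Proof.
have := @is_derive1_comp _ (@ln R) (fun t => 1 + expR (- t)) _ _ _
  (is_derive1_ln (logloss_arg_gt0 s)) (is_derive_logloss_arg s).
by move/is_derive_eq; apply; rewrite /logloss' mulrN mulrC.
Qed.

Lemma is_derive_logloss' (s : R) :
  is_derive s 1 (@logloss' R) (expR (- s) / (1 + expR (- s)) ^+ 2).
Proof.
have dV := @is_deriveV _ (fun t => 1 + expR (- t)) s _ _
  (lt0r_neq0 (logloss_arg_gt0 s)) (is_derive_logloss_arg s).
rewrite (_ : @logloss' R = (fun t => (1 + expR (- t))^-1) - cst 1); last first.
  apply/funext => t; rewrite /logloss' !fctE /cst.
  by field; rewrite lt0r_neq0 ?logloss_arg_gt0.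
by apply: is_derive_eq; rewrite subr0 scalerN scaleNr opprK mulrC.
Qed.

Lemma logloss'_ndecr : {homo @logloss' R : x y / x <= y}.
Proof.
apply: ge0_is_derive_ndecr is_derive_logloss' _ => z.
by rewrite divr_ge0 ?expR_ge0 ?exprn_ge0 ?ltW ?logloss_arg_gt0.
Qed.

Lemma logloss'_lipschitz (x y : R) : x <= y -> logloss' y - logloss' x <= (y - x) / 4.
Proof.
have df (z : R) : is_derive z 1 (fun t => 4^-1 * t - logloss' t)
    (4^-1 - expR (- z) / (1 + expR (- z)) ^+ 2).
  have := is_deriveB (is_deriveZ 4^-1 (is_derive_id z 1)) (is_derive_logloss' z).
  by move/is_derive_eq; apply; rewrite /GRing.scale /= mulr1.
have df_ge0 (z : R) : 0 <= 4^-1 - expR (- z) / (1 + expR (- z)) ^+ 2.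
  rewrite subr_ge0 ler_pdivrMr ?exprn_gt0 ?logloss_arg_gt0 // -subr_ge0.
  rewrite (_ : _ - _ = 4^-1 * (1 - expR (- z)) ^+ 2); last by field.
  by rewrite mulr_ge0 ?sqr_ge0.
move=> xy; have := ge0_is_derive_ndecr df df_ge0 xy; lra.
Qed.

Lemma logloss_tangent_le (r s : R) : logloss r + logloss' r * (s - r) <= logloss s.
Proof.
have df (z : R) : is_derive z 1 (fun t => logloss t - logloss' r * t) (logloss' z - logloss' r).
  have := is_deriveB (is_derive_logloss z) (is_deriveZ (logloss' r) (is_derive_id z 1)).
  by move/is_derive_eq; apply; rewrite /GRing.scale /= mulr1.
suff : logloss r - logloss' r * r <= logloss s - logloss' r * s by lra.
apply: (is_derive_sign_change_min df) => z zr;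
  by rewrite ?subr_le0 ?subr_ge0 logloss'_ndecr.
Qed.

Lemma logloss_le_quadratic (r s : R) :
  logloss s <= logloss r + logloss' r * (s - r) + (s - r) ^+ 2 / 8.
Proof.
have df (z : R) : is_derive z 1
    (fun t => logloss' r * t + 8^-1 * (t - r) ^+ 2 - logloss t)
    (logloss' r + 4^-1 * (z - r) - logloss' z).
  have dsq := is_deriveX 2 (is_deriveB (is_derive_id z 1) (is_derive_cst r z 1)).
  have := is_deriveB (is_deriveD (is_deriveZ (logloss' r) (is_derive_id z 1))
    (is_deriveZ 8^-1 dsq)) (is_derive_logloss z).
  by move/is_derive_eq; apply; rewrite !fctE /GRing.scale /= /cst; field.
suff : logloss' r * r + 8^-1 * (r - r) ^+ 2 - logloss r <=
       logloss' r * s + 8^-1 * (s - r) ^+ 2 - logloss s.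
  by rewrite subrr expr0n /=; lra.
by apply: (is_derive_sign_change_min df) => z zr; have := logloss'_lipschitz zr; lra.
Qed.

End LogisticLoss.

Section FrobeniusInner.
Variables (R : realType) (m d : nat).
Implicit Types A B C : 'M[R]_(m, d).

Lemma frob_innerE A B : frob_inner A B = \sum_(i < m) \sum_(j < d) A i j * B i j.
Proof.
rewrite /frob_inner /mxtrace exchange_big /=.
by apply: eq_bigr => j _; rewrite mxE; apply: eq_bigr => i _; rewrite !mxE.
Qed.

Lemma frob_innerC A B : frob_inner A B = frob_inner B A.
Proof. by rewrite /frob_inner -mxtrace_tr trmx_mul trmxK. Qed.

Lemma frob_innerDr A B C : frob_inner A (B + C) = frob_inner A B + frob_inner A C.
Proof. by rewrite /frob_inner mulmxDr mxtraceD. Qed.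

Lemma frob_innerZr (c : R) A B : frob_inner A (c *: B) = c * frob_inner A B.
Proof. by rewrite /frob_inner -scalemxAr mxtraceZ. Qed.

Lemma frob_innerNr A B : frob_inner A (- B) = - frob_inner A B.
Proof. by rewrite -scaleN1r frob_innerZr mulN1r. Qed.

Lemma frob_innerBr A B C : frob_inner A (B - C) = frob_inner A B - frob_inner A C.
Proof. by rewrite frob_innerDr frob_innerNr. Qed.

Lemma frob_inner0l B : frob_inner 0 B = 0.
Proof. by rewrite /frob_inner trmx0 mul0mx mxtrace0. Qed.

Lemma frob_innerZl (c : R) A B : frob_inner (c *: A) B = c * frob_inner A B.
Proof. by rewrite !(frob_innerC _ B) frob_innerZr. Qed.

Lemma frob_innerBl A B C : frob_inner (A - B) C = frob_inner A C - frob_inner B C.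
Proof. by rewrite !(frob_innerC _ C) frob_innerBr. Qed.

Lemma frob_inner_suml (I : finType) (F : I -> 'M[R]_(m, d)) B :
  frob_inner (\sum_i F i) B = \sum_i frob_inner (F i) B.
Proof. by rewrite /frob_inner linear_sum mulmx_suml raddf_sum. Qed.

Lemma frob_sqrE A : frob A ^+ 2 = \sum_(i < m) \sum_(j < d) A i j ^+ 2.
Proof. by rewrite sqr_sqrtr //; do 2![apply: sumr_ge0 => ? _]; exact: sqr_ge0. Qed.

Lemma frob_sqr A : frob A ^+ 2 = frob_inner A A.
Proof. by rewrite frob_sqrE frob_innerE; do 2![apply: eq_bigr => ? _]; rewrite expr2. Qed.

Lemma frob_inner_self_eq0 A : frob_inner A A = 0 -> A = 0.
Proof.
have row_ge0 i : 0 <= \sum_(j < d) A i j * A i j.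
  by apply: sumr_ge0 => j _; rewrite -expr2 sqr_ge0.
rewrite frob_innerE => /psumr_eq0P-/(_ (fun i _ => row_ge0 i)) rows0.
apply/matrixP => i j; rewrite mxE; apply/eqP; rewrite -[_ == 0]orbb -mulf_eq0; apply/eqP.
by apply: psumr_eq0P (rows0 i isT) j isT => k _; rewrite -expr2 sqr_ge0.
Qed.

Lemma frob_sqrB_scale (c : R) A B :
  frob (A - c *: B) ^+ 2 = frob A ^+ 2 - 2 * c * frob_inner A B + c ^+ 2 * frob B ^+ 2.
Proof.
rewrite !frob_sqr frob_innerBl !frob_innerBr !frob_innerZl !frob_innerZr (frob_innerC B A).
ring.
Qed.

Lemma frob_inner_sqr_le A B : frob_inner A B ^+ 2 <= frob A ^+ 2 * frob B ^+ 2.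
Proof.
rewrite !frob_sqr.
have [/frob_inner_self_eq0 -> | P_neq0] := eqVneq (frob_inner A A) 0.
  by rewrite !frob_inner0l expr0n mul0r.
have P_gt0 : 0 < frob_inner A A by rewrite lt0r P_neq0 -frob_sqr sqr_ge0.
have := sqr_ge0 (frob (frob_inner A B *: A - frob_inner A A *: B)).
rewrite frob_sqrB_scale !frob_sqr !frob_innerZl frob_innerZr.
set P := frob_inner A A; set c := frob_inner A B; set Q := frob_inner B B.
rewrite (_ : _ + _ = P * (P * Q - c ^+ 2)); last by ring.
by rewrite pmulr_rge0 // subr_ge0.
Qed.

End FrobeniusInner.

Section Network.
Variables (R : realType) (m d : nat) (rho : R) (a : 'I_m -> R).

Lemma frob_inner_net_grad_self (x : 'cV[R]_d) (W : 'M[R]_(m, d)) :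
  frob_inner (net_grad rho a x W) W = net rho a x W.
Proof.
rewrite frob_innerE /net mulr_sumr; apply: eq_bigr => j _.
under eq_bigr do rewrite mxE.
transitivity (rho / Num.sqrt m%:R *
    (a j * ((if 0 <= preact W x j then 1 else 0) * preact W x j))).
  by rewrite /preact !mulr_sumr; apply: eq_bigr => l _; ring.
by case: ifPn => [/max_r ->|]; rewrite ?mul1r // -ltNge => /ltW/max_l ->; rewrite mul0r.
Qed.

Lemma frob_net_grad_le (x : 'cV[R]_d) (W : 'M[R]_(m, d)) :
  (forall j, a j ^+ 2 <= 1) -> frob (net_grad rho a x W) ^+ 2 <= rho ^+ 2 * frob x ^+ 2.
Proof.
move=> a_le1; set c := rho / Num.sqrt m%:R.
have mc_le : m%:R * c ^+ 2 <= rho ^+ 2.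
  case: (posnP m) => [-> | m_gt0]; first by rewrite mul0r sqr_ge0.
  by rewrite exprMn exprVn sqr_sqrtr ?ler0n // mulrCA divff ?mulr1 ?pnatr_eq0 -?lt0n.
have entry_le j l : net_grad rho a x W j l ^+ 2 <= c ^+ 2 * x l ord0 ^+ 2.
  rewrite mxE [leLHS]exprMn ler_wpM2l ?sqr_ge0 // !exprMn mulrA ler_piMl ?sqr_ge0 //.
  by rewrite mulr_ile1 ?sqr_ge0 //; case: ifP; rewrite ?expr1n ?expr0n.
rewrite !frob_sqrE.
under [in leRHS]eq_bigr do rewrite big_ord1.
apply: (@le_trans _ _ (\sum_(j < m) \sum_(l < d) c ^+ 2 * x l ord0 ^+ 2)).
  by apply: ler_sum => j _; apply: ler_sum => l _; exact: entry_le.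
rewrite sumr_const card_ord -mulr_sumr -mulr_natl mulrA ler_wpM2r //.
by apply: sumr_ge0 => l _; exact: sqr_ge0.
Qed.

End Network.

Section LinearizedRisk.
Variables (R : realType) (n m d : nat) (g : 'I_n -> 'M[R]_(m, d)) (ys : 'I_n -> R).

Definition linrisk (V : 'M[R]_(m, d)) : R :=
  n%:R^-1 * \sum_(k < n) logloss (ys k * frob_inner (g k) V).

Definition linrisk_grad (V : 'M[R]_(m, d)) : 'M[R]_(m, d) :=
  n%:R^-1 *: \sum_(k < n) (logloss' (ys k * frob_inner (g k) V) * ys k) *: g k.

Lemma frob_inner_linrisk_grad (V U : 'M[R]_(m, d)) :
  frob_inner (linrisk_grad V) U =
  n%:R^-1 * \sum_(k < n) logloss' (ys k * frob_inner (g k) V) * (ys k * frob_inner (g k) U).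
Proof.
rewrite frob_innerZl frob_inner_suml; congr (_ * _); apply: eq_bigr => k _.
by rewrite frob_innerZl mulrA.
Qed.

Lemma linrisk_tangent_le (V Z : 'M[R]_(m, d)) :
  linrisk V + frob_inner (linrisk_grad V) (Z - V) <= linrisk Z.
Proof.
rewrite frob_inner_linrisk_grad /linrisk -mulrDr ler_wpM2l ?invr_ge0 ?ler0n //.
rewrite -big_split ler_sum // => k _ /=.
by rewrite frob_innerBr mulrBr logloss_tangent_le.
Qed.

Variable rho : R.
Hypotheses (n_gt0 : (0 < n)%N) (ys_sqr_le1 : forall k, ys k ^+ 2 <= 1)
  (frob_g_le : forall k, frob (g k) ^+ 2 <= rho ^+ 2).

(* The smoothness constant is rho^2/4: [logloss''] is at most 1/4 and [frob (g k) <= rho]. *)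
Lemma linrisk_descent (V : 'M[R]_(m, d)) (eta : R) :
  linrisk (V - eta *: linrisk_grad V) <=
  linrisk V - eta * (1 - rho ^+ 2 / 4 * eta / 2) * frob (linrisk_grad V) ^+ 2.
Proof.
set D := linrisk_grad V; set Q := frob D ^+ 2.
have sample_le k : logloss (ys k * frob_inner (g k) (V - eta *: D)) <=
    logloss (ys k * frob_inner (g k) V)
    - eta * (logloss' (ys k * frob_inner (g k) V) * (ys k * frob_inner (g k) D))
    + (rho * eta) ^+ 2 / 8 * Q.
  have := logloss_le_quadratic (ys k * frob_inner (g k) V)
    (ys k * frob_inner (g k) (V - eta *: D)).
  rewrite frob_innerBr frob_innerZr.
  set u := frob_inner (g k) V; set v := frob_inner (g k) D.
  have yv_le : (ys k * v) ^+ 2 <= rho ^+ 2 * Q.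
    rewrite exprMn; apply: le_trans (ler_piMl (sqr_ge0 _) (ys_sqr_le1 k)) _.
    apply: le_trans (frob_inner_sqr_le _ _) _.
    by rewrite ler_wpM2r ?sqr_ge0.
  have -> : ys k * (u - eta * v) - ys k * u = - eta * (ys k * v) by ring.
  have : (- eta * (ys k * v)) ^+ 2 <= eta ^+ 2 * (rho ^+ 2 * Q).
    by rewrite exprMn sqrrN ler_wpM2l ?sqr_ge0.
  rewrite exprMn; lra.
have Q_avg : Q = n%:R^-1 *
    \sum_(k < n) logloss' (ys k * frob_inner (g k) V) * (ys k * frob_inner (g k) D).
  by rewrite /Q frob_sqr frob_inner_linrisk_grad.
have n_inv_ge0 : 0 <= n%:R^-1 :> R by rewrite invr_ge0 ler0n.
rewrite /linrisk; apply: le_trans (ler_wpM2l n_inv_ge0 (ler_sum _ (fun k _ => sample_le k))) _.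
rewrite big_split /= sumrB -mulr_sumr sumr_const card_ord -[_ * Q *+ n]mulr_natr.
rewrite Q_avg le_eqVlt; apply/orP; left; apply/eqP.
by field; rewrite pnatr_eq0 -lt0n.
Qed.

End LinearizedRisk.

Section GradientStep.
Variables (R : realType) (m d : nat).

Lemma gd_step_potential_le (F : 'M[R]_(m, d) -> R) (G V Z : 'M[R]_(m, d)) (L eta : R) :
  0 <= eta -> L * eta <= 1 ->
  F V + frob_inner G (Z - V) <= F Z ->
  F (V - eta *: G) <= F V - eta * (1 - L * eta / 2) * frob G ^+ 2 ->
  frob (V - eta *: G - Z) ^+ 2 + 2 * eta * F (V - eta *: G) <=
  frob (V - Z) ^+ 2 + 2 * eta * F Z.
Proof.
move=> eta_ge0 Leta_le1 tangent descent.
rewrite addrAC frob_sqrB_scale (frob_innerC (V - Z)) -(opprB Z V) frob_innerNr.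
have eta2_ge0 : 0 <= 2 * eta by rewrite mulr_ge0.
have := ler_wpM2l eta2_ge0 tangent; have := ler_wpM2l eta2_ge0 descent.
have : 0 <= eta ^+ 2 * frob G ^+ 2 * (1 - L * eta).
  by apply: mulr_ge0; rewrite ?subr_ge0 // mulr_ge0 ?sqr_ge0.
lra.
Qed.

End GradientStep.

Section GradientDescent.
Variables (R : realType) (n m d : nat) (rho : R) (a : 'I_m -> R).
Variables (xs : 'I_n -> 'cV[R]_d) (ys : 'I_n -> R) (W0 : 'M[R]_(m, d)) (eta : R).

Local Notation W := (gd rho a xs ys eta W0).
Local Notation features V := (fun k => net_grad rho a (xs k) V).

Lemma emp_risk_gradE (V : 'M[R]_(m, d)) :
  emp_risk_grad rho a xs ys V = linrisk_grad (features V) ys V.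
Proof.
by congr (_ *: _); apply: eq_bigr => k _; rewrite frob_inner_net_grad_self.
Qed.

Lemma lin_riskE (i : nat) (V : 'M[R]_(m, d)) :
  lin_risk rho a xs ys eta W0 i V = linrisk (features (W i)) ys V.
Proof. by []. Qed.

Hypotheses (n_gt0 : (0 < n)%N) (rho_gt0 : 0 < rho) (eta_ge0 : 0 <= eta)
  (eta_le : eta <= 4 / rho ^+ 2) (a_sqr_le1 : forall j, a j ^+ 2 <= 1)
  (xs_le1 : forall k, frob (xs k) <= 1) (ys_sqr_le1 : forall k, ys k ^+ 2 <= 1).

Lemma gd_potential_step (i : nat) (Z : 'M[R]_(m, d)) :
  frob (W i.+1 - Z) ^+ 2 + 2 * eta * lin_risk rho a xs ys eta W0 i (W i.+1) <=
  frob (W i - Z) ^+ 2 + 2 * eta * lin_risk rho a xs ys eta W0 i Z.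
Proof.
rewrite !lin_riskE /= emp_risk_gradE.
apply: (gd_step_potential_le (L := rho ^+ 2 / 4)) => //.
- by rewrite mulrAC ler_pdivrMr // mul1r mulrC -ler_pdivlMr ?exprn_gt0.
- exact: linrisk_tangent_le.
apply: linrisk_descent => // k.
apply: le_trans (frob_net_grad_le _ _ _ a_sqr_le1) _.
by rewrite ler_piMr ?sqr_ge0 // expr_le1 ?sqrtr_ge0.
Qed.

End GradientDescent.

Theorem lemmaA10 (R : realType) (n m d : nat) (rho : R) (a : 'I_m -> R)
  (xs : 'I_n -> 'cV[R]_d) (ys : 'I_n -> R) (W0 : 'M[R]_(m, d)) (eta : R) :
  (0 < n)%N -> (0 < m)%N -> 0 < rho ->
  (forall j, a j = 1 \/ a j = -1) ->
  (forall k, frob (xs k) <= 1) ->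
  (forall k, ys k = 1 \/ ys k = -1) ->
  0 < eta -> eta <= 4 / rho ^+ 2 ->
  forall (Z : 'M[R]_(m, d)) (t : nat),
    frob (gd rho a xs ys eta W0 t - Z) ^+ 2
      + 2 * eta * \sum_(i < t) lin_risk rho a xs ys eta W0 i (gd rho a xs ys eta W0 i.+1)
    <= frob (W0 - Z) ^+ 2
      + 2 * eta * \sum_(i < t) lin_risk rho a xs ys eta W0 i Z.
Proof.
move=> n_gt0 _ rho_gt0 a_pm1 xs_le1 ys_pm1 /ltW eta_ge0 eta_le Z.
have sqr_pm1 (y : R) : y = 1 \/ y = -1 -> y ^+ 2 <= 1.
  by case=> ->; rewrite ?sqrrN expr1n.
have step := gd_potential_step W0 n_gt0 rho_gt0 eta_ge0 eta_le
  (fun j => sqr_pm1 _ (a_pm1 j)) xs_le1 (fun k => sqr_pm1 _ (ys_pm1 k)).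
elim=> [|t IH]; first by rewrite !big_ord0.
by rewrite !big_ord_recr /=; have := step t Z; lra.
Qed.
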